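(* For every $k \geq 4$, there exists an even polynomial $p \in \Delta_k$ such that $x_1^2x_2^2 \cdots x_k^2$ divides $p$ and $(1,0,\ldots,0)$ is a bad point for $p$.
   Context: $P_k$ is the set of homogeneous polynomials in $\mathbb{R}[x_1,\ldots,x_k]$ taking only non-negative values on $\mathbb{R}^k$; $\Sigma_k$ is the set of homogeneous polynomials in $k$ variables that are sums of squares of polynomials with real coefficients; $\Delta_k=P_k\setminus\Sigma_k$. A polynomial is even if every variable appears with even exponent in every monomial. A point $x_0\in\mathbb{R}^k$ is a bad point for $p\in P_k$ if $q(x_0)=0$ for every polynomial $q\in\mathbb{R}[x_1,\ldots,x_k]$ such that $q^2p\in\Sigma_k$. *)

From HB Require Import structures.
From mathcomp Require Import all_boot all_order all_algebra.
From mathcomp Require Import Rstruct.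
From mathcomp Require Import mpoly.
From Stdlib Require Import Reals.

Set Implicit Arguments.
Unset Strict Implicit.
Unset Printing Implicit Defensive.

Import Order.TTheory GRing.Theory Num.Theory.
Local Open Scope ring_scope.

Definition homogeneous (k : nat) (p : {mpoly R[k]}) : Prop :=
  exists d : nat, p \is d.-homog.

Definition in_P (k : nat) (p : {mpoly R[k]}) : Prop :=
  homogeneous p /\ forall x : 'I_k -> R, 0 <= p.@[x].

Definition in_Sigma (k : nat) (p : {mpoly R[k]}) : Prop :=
  homogeneous p /\
  exists qs : seq {mpoly R[k]}, p = \sum_(q <- qs) q ^+ 2.

Definition in_Delta (k : nat) (p : {mpoly R[k]}) : Prop :=
  in_P p /\ ~ in_Sigma p.

Definition even_mpoly (k : nat) (p : {mpoly R[k]}) : Prop :=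
  forall m, m \in msupp p -> forall i : 'I_k, ~~ odd (m i).

Definition mdivides (k : nat) (a p : {mpoly R[k]}) : Prop :=
  exists r : {mpoly R[k]}, p = a * r.

Definition sq_monomial (k : nat) : {mpoly R[k]} :=
  \prod_(i < k) ('X_i) ^+ 2.

Definition bad_point (k : nat) (p : {mpoly R[k]}) (x0 : 'I_k -> R) : Prop :=
  forall q : {mpoly R[k]}, in_Sigma (q ^+ 2 * p) -> q.@[x0] = 0.

Definition e1 (k : nat) : 'I_k -> R :=
  fun i => if val i == 0%N then 1 else 0.
Arguments sq_monomial k : clear implicits.
Arguments e1 k : clear implicits.

(* The witness is p = x_1^2 ... x_k^2 M(x_2, x_3, x_4), with M the Motzkin form.
   Suppose q^2 p is a sum of squares. Substituting x_1 = 1, x_i = t y_i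
   (i = 2, 3, 4) and x_j = t (j >= 5) gives a sum of squares of polynomials in t
   over R[y, z, w] equal to t^(2(n+6)) q(1, ty, tz, tw, t, ...)^2 y^2 z^2 w^2 M.
   Over a formally real coefficient ring every summand is then divisible by
   t^(n+6), so the cofactor at t = 0, namely q(e_1)^2 y^2 z^2 w^2 M, is a sum of
   squares. This forces q(e_1) = 0: weighted-degree bounds for four weight
   vectors confine the monomials of any summand to half the Newton polytope,
   where y^4 z^4 w^4 only arises as a square, whereas its coefficient is -3.
   Taking q = 1 also shows that p is not a sum of squares. *)

From Stdlib Require Import Reals.
From HB Require Import structures.
From mathcomp Require Import all_boot all_order all_algebra.
From mathcomp Require Import Rstruct mpoly.
From mathcomp Require Import ring zify.
Set Implicit Arguments.
Unset Strict Implicit.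
Unset Printing Implicit Defensive.
Import Order.TTheory GRing.Theory Num.Theory.
Local Open Scope ring_scope.

Section SumSquaresPoly.
Variable A : idomainType.
Hypothesis sumsq_eq0 :
  forall s : seq A, \sum_(a <- s) a ^+ 2 = 0 -> forall a, a \in s -> a = 0.

Lemma sumsq_root0 (N : nat) (Fs : seq {poly A}) (Q : {poly A}) : (0 < N)%N ->
  \sum_(F <- Fs) F ^+ 2 = 'X^N * Q -> forall F, F \in Fs -> F.[0] = 0.
Proof.
move=> N_gt0 eFQ F FFs; apply: (sumsq_eq0 _ (map_f (horner^~ 0) FFs)).
have := congr1 (horner^~ 0) eFQ; rewrite /= horner_sum hornerM hornerXn.
rewrite expr0n eqn0Ngt N_gt0 mul0r => e0.
rewrite -[RHS]e0 big_map.
by apply: eq_bigr => G _; rewrite horner_exp.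
Qed.

Lemma drop_polyXK (F : {poly A}) : F.[0] = 0 -> drop_poly 1 F * 'X = F.
Proof.
move=> F0; rewrite -[RHS](poly_take_drop 1) expr1.
suff -> : take_poly 1 F = 0 by rewrite add0r.
apply/polyP => -[|i]; rewrite coef_take_poly coef0 //=.
by rewrite -horner_coef0.
Qed.

Lemma sumsq_eq_X2n_mul (m : nat) (Fs : seq {poly A}) (Q : {poly A}) :
  \sum_(F <- Fs) F ^+ 2 = 'X^(2 * m) * Q ->
  exists2 Gs, Fs = map ( *%R 'X^m) Gs & Q = \sum_(G <- Gs) G ^+ 2.
Proof.
elim: m Fs Q => [|m IHm] Fs Q eFQ.
  by exists Fs; [rewrite expr0 map_id_in // => F _; rewrite mul1r | rewrite eFQ expr0 mul1r].
have Fs0 := sumsq_root0 (isT : (0 < 2 * m.+1)%N) eFQ.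
have eX2 : \sum_(F <- Fs) F ^+ 2 = 'X^2 * \sum_(F <- map (drop_poly 1) Fs) F ^+ 2.
  rewrite big_map mulr_sumr !big_seq; apply: eq_bigr => F FFs.
  by rewrite -{1}(drop_polyXK (Fs0 F FFs)) exprMn mulrC.
have X2_neq0 : ('X^2 : {poly A}) != 0 by rewrite expf_neq0 // polyX_eq0.
move: eFQ; rewrite eX2 mulnS exprD -mulrA => /(mulfI X2_neq0) /IHm [Gs eGs ->].
have -> : Fs = map ( *%R 'X) (map (drop_poly 1) Fs).
  rewrite -map_comp; apply/esym/map_id_in => F /Fs0 /drop_polyXK /=.
  by rewrite mulrC.
exists Gs => //; rewrite eGs -map_comp.
by apply: eq_map => G /=; rewrite exprS mulrA.
Qed.
End SumSquaresPoly.

Section MpolySumSquares.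
Variables (n : nat) (K : realDomainType).
Implicit Types p q : {mpoly K[n]}.

Lemma mleadcD_gt0 p q : 0 <= mleadc p -> 0 <= mleadc q -> p != 0 ->
  0 < mleadc (p + q).
Proof.
move=> p_ge0 q_ge0 p_neq0.
have lc_gt0 r : 0 <= mleadc r -> r != 0 -> 0 < mleadc r.
  by move=> r_ge0 r_neq0; rewrite lt_def mleadc_eq0 r_neq0.
have [->|q_neq0] := eqVneq q 0; first by rewrite addr0 lc_gt0.
have coef_ge0 r m : 0 <= mleadc r -> (mlead r <= m)%O -> 0 <= r@_m.
  move=> r_ge0; rewrite le_eqVlt => /orP[/eqP <- //|lt_m].
  by rewrite mcoeff_gt_mlead.
pose m := (mlead p `|` mlead q)%O.
have pq_m_gt0 : 0 < (p + q)@_m.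
  rewrite mcoeffD /m; case: (leP (mlead p) (mlead q)) => [le_pq|lt_qp].
  - by rewrite ltr_wpDl ?lc_gt0 // coef_ge0.
  - by rewrite ltr_wpDr ?lc_gt0 // coef_ge0 // ltW.
suff -> : mlead (p + q) = m by [].
apply/le_anti; rewrite mleadD_le /=.
by apply: msupp_le_mlead; rewrite mcoeff_msupp gt_eqF.
Qed.

Lemma mleadc_sqr_ge0 p : 0 <= mleadc (p ^+ 2).
Proof.
have [->|p_neq0] := eqVneq p 0; first by rewrite expr0n mlead0 mcoeff0.
by rewrite mleadX // mleadcX sqr_ge0.
Qed.

Lemma mleadc_sumsq_ge0 (s : seq {mpoly K[n]}) : 0 <= mleadc (\sum_(a <- s) a ^+ 2).
Proof.
elim: s => [|b s IHs]; first by rewrite big_nil mlead0 mcoeff0.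
rewrite big_cons; have [->|b2_neq0] := eqVneq (b ^+ 2) 0; first by rewrite add0r.
exact/ltW/(mleadcD_gt0 (mleadc_sqr_ge0 b) IHs).
Qed.

Lemma mpoly_sumsq_eq0 (s : seq {mpoly K[n]}) :
  \sum_(a <- s) a ^+ 2 = 0 -> forall a, a \in s -> a = 0.
Proof.
elim: s => [|b s IHs] //; rewrite big_cons => e0.
have b_eq0 : b = 0.
  apply/eqP; apply: contraT => b_neq0.
  have := mleadcD_gt0 (mleadc_sqr_ge0 b) (mleadc_sumsq_ge0 s) (expf_neq0 2 b_neq0).
  by rewrite e0 mlead0 mcoeff0 ltxx.
move: e0; rewrite b_eq0 expr0n add0r => /IHs s_eq0 a.
by rewrite inE => /orP[/eqP ->|/s_eq0].
Qed.
End MpolySumSquares.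

Section WeightedDegree.
Variables (n : nat) (K : realDomainType) (w : 'I_n -> nat).
Implicit Types G : {mpoly K[n]}.

Definition wdeg (mu : 'X_{1..n}) : nat := (\sum_(i < n) w i * mu i)%N.

Definition weight_subst : {mpoly K[n]} -> {poly {mpoly K[n]}} :=
  mmap ((@polyC _) \o (@mpolyC n K)) (fun i => 'X^(w i) * ('X_i)%:P).

Lemma weight_substE G : weight_subst G =
  \sum_(mu <- msupp G) (G@_mu *: 'X_[mu])%:P * 'X^(wdeg mu).
Proof.
apply: eq_bigr => mu _; rewrite /mmap1 /=.
under eq_bigr do rewrite exprMn -exprM.
rewrite big_split /= prodrXr.
have -> : \prod_(i < n) ('X_i : {mpoly K[n]})%:P ^+ mu i = ('X_[mu])%:P.
  by rewrite mpolyXE_id rmorph_prod; apply: eq_bigr => i _; rewrite rmorphXn.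
by rewrite -mul_mpolyC polyCM /wdeg -mulrA [_ * (_%:P)]mulrC.
Qed.

Lemma weight_subst_Xn_mul G (m : nat) :
  (forall mu, mu \in msupp G -> m <= wdeg mu)%N ->
  exists Q, weight_subst G = 'X^m * Q.
Proof.
move=> G_ge; exists (\sum_(mu <- msupp G) (G@_mu *: 'X_[mu])%:P * 'X^(wdeg mu - m)).
rewrite weight_substE mulr_sumr !big_seq; apply: eq_bigr => mu mu_G.
by rewrite mulrCA -exprD subnKC ?G_ge.
Qed.

Lemma mcoeff_weight_subst_Xn_mul G (m : nat) Q : weight_subst G = 'X^m * Q ->
  forall mu, (wdeg mu < m)%N -> G@_mu = 0.
Proof.
move=> eGQ mu lt_mu_m.
have := congr1 (fun P : {poly {mpoly K[n]}} => (P`_(wdeg mu))@_mu) eGQ.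
rewrite /= coefXnM lt_mu_m mcoeff0 weight_substE coef_sum raddf_sum /=.
have [mu_G|/memN_msupp_eq0 //] := boolP (mu \in msupp G).
rewrite (bigD1_seq mu) ?msupp_uniq //= coefCM coefXn eqxx mulr1 mcoeffZ mcoeffX.
rewrite eqxx mulr1 big1 ?addr0 // => mu' ne_mu'.
rewrite coefCM coefXn; case: eqP => _; last by rewrite mulr0 mcoeff0.
by rewrite mulr1 mcoeffZ mcoeffX (negbTE ne_mu') mulr0.
Qed.

Lemma sumsq_low_wdeg (gs : seq {mpoly K[n]}) (m : nat) :
  (forall mu, mu \in msupp (\sum_(g <- gs) g ^+ 2) -> 2 * m <= wdeg mu)%N ->
  forall g, g \in gs -> forall mu, (wdeg mu < m)%N -> g@_mu = 0.
Proof.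
move=> sum_ge g g_gs.
have [Q eQ] := weight_subst_Xn_mul sum_ge.
have : \sum_(F <- map weight_subst gs) F ^+ 2 = 'X^(2 * m) * Q.
  by rewrite -eQ big_map /weight_subst rmorph_sum; apply: eq_bigr => F _; rewrite rmorphXn.
case/(sumsq_eq_X2n_mul (@mpoly_sumsq_eq0 n K)) => Gs eGs _.
have : weight_subst g \in map ( *%R 'X^m) Gs by rewrite -eGs map_f.
by case/mapP=> G _; apply: mcoeff_weight_subst_Xn_mul.
Qed.
End WeightedDegree.

Definition motzkin (S : comRingType) (y z w : S) : S :=
  y ^+ 4 * z ^+ 2 + y ^+ 2 * z ^+ 4 + w ^+ 6 - (y ^+ 2 * z ^+ 2 * w ^+ 2) *+ 3.

Lemma rmorph_motzkin (S T : comRingType) (f : {rmorphism S -> T}) (y z w : S) :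
  f (motzkin y z w) = motzkin (f y) (f z) (f w).
Proof. by rewrite /motzkin !(rmorphB, rmorphD, rmorphM, rmorphMn, rmorphXn). Qed.

Section MotzkinNotSOS.
Variable K : realDomainType.

Definition mono3 (a b c : nat) : 'X_{1..3} := [multinom nth 0 [:: a; b; c] i | i < 3].
Definition weight3 (a b c : nat) (i : 'I_3) : nat := nth 0 [:: a; b; c] i.

Local Notation i0 := (ord0 : 'I_3).
Local Notation i1 := (lift ord0 ord0 : 'I_3).
Local Notation i2 := (lift ord0 (lift ord0 ord0) : 'I_3).

Lemma mono3E a b c i : mono3 a b c i = nth 0 [:: a; b; c] i.
Proof. exact: mnmE. Qed.

Lemma wdeg3 a b c mu :
  wdeg (weight3 a b c) mu = (a * mu i0 + b * mu i1 + c * mu i2)%N.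
Proof. by rewrite /wdeg !big_ord_recl big_ord0 addn0 addnA. Qed.

Lemma wdeg3_mono3 a b c x y z :
  wdeg (weight3 a b c) (mono3 x y z) = (a * x + b * y + c * z)%N.
Proof. by rewrite wdeg3 !mono3E. Qed.

Lemma mnm3_ext (mu nu : 'X_{1..3}) :
  mu i0 = nu i0 -> mu i1 = nu i1 -> mu i2 = nu i2 -> mu = nu.
Proof.
move=> e0 e1 e2; apply/mnmP => -[[|[|[|//]]] i_lt].
- by rewrite (_ : Ordinal i_lt = i0) //; apply: val_inj.
- by rewrite (_ : Ordinal i_lt = i1) //; apply: val_inj.
- by rewrite (_ : Ordinal i_lt = i2) //; apply: val_inj.
Qed.

Lemma eq_mono3 a b c x y z :
  (mono3 a b c == mono3 x y z) = [&& a == x, b == y & c == z].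
Proof.
apply/eqP/and3P => [e|[/eqP-> /eqP-> /eqP->] //].
have coord i : mono3 a b c i = mono3 x y z i by rewrite e.
by move: (coord i0) (coord i1) (coord i2); rewrite !mono3E /= => -> -> ->.
Qed.

Definition Y : {mpoly K[3]} := 'X_i0.
Definition Z : {mpoly K[3]} := 'X_i1.
Definition W : {mpoly K[3]} := 'X_i2.

Lemma mpolyX_mono3 a b c : 'X_[mono3 a b c] = Y ^+ a * Z ^+ b * W ^+ c.
Proof. by rewrite mpolyXE_id !big_ord_recl big_ord0 !mono3E mulr1 mulrA. Qed.

Definition motzkin_yzw : {mpoly K[3]} := (Y * Z * W) ^+ 2 * motzkin Y Z W.

Lemma motzkin_yzwE : motzkin_yzw =
  'X_[mono3 6 4 2] + 'X_[mono3 4 6 2] + 'X_[mono3 2 2 8] - 'X_[mono3 4 4 4] *+ 3.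
Proof. by rewrite !mpolyX_mono3 /motzkin_yzw /motzkin; ring. Qed.

Lemma msupp_motzkin_yzw mu : mu \in msupp motzkin_yzw ->
  [\/ mu = mono3 6 4 2, mu = mono3 4 6 2, mu = mono3 2 2 8 | mu = mono3 4 4 4].
Proof.
rewrite mcoeff_msupp motzkin_yzwE mcoeffB mcoeffMn !mcoeffD !mcoeffX.
case: (eqVneq (mono3 6 4 2) mu) => [->|_]; first by constructor.
case: (eqVneq (mono3 4 6 2) mu) => [->|_]; first by constructor.
case: (eqVneq (mono3 2 2 8) mu) => [->|_]; first by constructor.
case: (eqVneq (mono3 4 4 4) mu) => [->|_]; first by constructor.
by rewrite !addr0 mul0rn subr0 eqxx.
Qed.

Lemma mcoeff_motzkin_yzw_444 : motzkin_yzw@_(mono3 4 4 4) = - 3%:R.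
Proof.
rewrite motzkin_yzwE mcoeffB mcoeffMn !mcoeffD !mcoeffX !eq_mono3 /=.
by rewrite !add0r.
Qed.

Lemma motzkin_yzw_wdeg_ge a b c m :
  (2 * m <= 6 * a + 4 * b + 2 * c)%N -> (2 * m <= 4 * a + 6 * b + 2 * c)%N ->
  (2 * m <= 2 * a + 2 * b + 8 * c)%N -> (2 * m <= 4 * a + 4 * b + 4 * c)%N ->
  forall mu, mu \in msupp motzkin_yzw -> (2 * m <= wdeg (weight3 a b c) mu)%N.
Proof.
by move=> ? ? ? ? mu /msupp_motzkin_yzw [] ->; rewrite wdeg3_mono3; lia.
Qed.

(* By [sumsq_low_wdeg] for these four weights, the summands of any square
   decomposition of [motzkin_yzw] are supported on [half_newton]. *)
Definition half_newton (mu : 'X_{1..3}) : bool :=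
  [&& 6 <= wdeg (weight3 1 1 1) mu, 1 <= wdeg (weight3 0 0 1) mu,
      7 <= wdeg (weight3 3 0 1) mu & 7 <= wdeg (weight3 0 3 1) mu]%N.

Lemma half_newton_sum_444 (mu nu : 'X_{1..3}) : (mu + nu)%MM = mono3 4 4 4 ->
  half_newton mu -> half_newton nu -> mu = nu.
Proof.
move=> /mnmP e; have := e i0; have := e i1; have := e i2.
rewrite !mnmDE !mono3E /half_newton !wdeg3 /= => e2 e1 e0.
move=> /and4P[? ? ? ?] /and4P[? ? ? ?]; apply: mnm3_ext; lia.
Qed.

Lemma sumsq_half_newton (gs : seq {mpoly K[3]}) :
  motzkin_yzw = \sum_(g <- gs) g ^+ 2 ->
  forall g, g \in gs -> forall mu, ~~ half_newton mu -> g@_mu = 0.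
Proof.
move=> e g g_gs mu; rewrite negb_and !negb_and -!ltnNge.
have low a b c m := @sumsq_low_wdeg 3 K (weight3 a b c) gs m.
rewrite -e in low; case/or4P => lt_mu.
- by apply: (low 1 1 1 6%N) lt_mu; first exact: motzkin_yzw_wdeg_ge.
- by apply: (low 0 0 1 1%N) lt_mu; first exact: motzkin_yzw_wdeg_ge.
- by apply: (low 3 0 1 7%N) lt_mu; first exact: motzkin_yzw_wdeg_ge.
- by apply: (low 0 3 1 7%N) lt_mu; first exact: motzkin_yzw_wdeg_ge.
Qed.

Lemma motzkin_yzw_not_sumsq (gs : seq {mpoly K[3]}) :
  motzkin_yzw <> \sum_(g <- gs) g ^+ 2.
Proof.
move=> e; have gs_half := sumsq_half_newton e.
have : 0 <= (\sum_(g <- gs) g ^+ 2)@_(mono3 4 4 4).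
  rewrite raddf_sum big_seq; apply: sumr_ge0 => g g_gs.
  rewrite /= expr2 mcoeffM; apply: sumr_ge0 => -[mu nu] /= /eqP e444.
  have [mu_half|/(gs_half g g_gs)->] := boolP (half_newton mu); last by rewrite mul0r.
  have [nu_half|/(gs_half g g_gs)->] := boolP (half_newton nu); last by rewrite mulr0.
  by rewrite (half_newton_sum_444 (esym e444)) // -expr2 sqr_ge0.
by rewrite -e mcoeff_motzkin_yzw_444 oppr_ge0 leNgt ltr0n.
Qed.
End MotzkinNotSOS.

Arguments Y {K}.
Arguments Z {K}.
Arguments W {K}.
Arguments motzkin_yzw {K}.

Lemma motzkin_ge0 (F : realDomainType) (y z w : F) : 0 <= motzkin y z w.
Proof.
have -> : motzkin y z w = motzkin `|y| `|z| w.
  by rewrite /motzkin (_ : 4 = 2 * 2)%N // !exprM !real_normK ?num_real.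
set a := `|y|; set b := `|z|.
have -> : motzkin a b w =
    (a * b * (a - b)) ^+ 2 + (w ^+ 2 - a * b) ^+ 2 * (w ^+ 2 + (a * b) *+ 2).
  by rewrite /motzkin; ring.
have ab_ge0 : 0 <= a * b := mulr_ge0 (normr_ge0 y) (normr_ge0 z).
by rewrite addr_ge0 ?sqr_ge0 // mulr_ge0 ?sqr_ge0 // addr_ge0 ?sqr_ge0 ?mulrn_wge0.
Qed.

Lemma dhomog_motzkin (n : nat) (S : comRingType) (y z w : {mpoly S[n]}) :
  y \is 1.-homog -> z \is 1.-homog -> w \is 1.-homog -> motzkin y z w \is 6.-homog.
Proof.
move=> hy hz hw; rewrite /motzkin; apply: rpredB; last apply: rpredMn.
  apply: rpredD; first apply: rpredD.
  - exact: (dhomogM (dhomogMn 4 hy) (dhomogMn 2 hz)).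
  - exact: (dhomogM (dhomogMn 2 hy) (dhomogMn 4 hz)).
  - exact: (dhomogMn 6 hw).
exact: (dhomogM (dhomogM (dhomogMn 2 hy) (dhomogMn 2 hz)) (dhomogMn 2 hw)).
Qed.

Section EvenMpoly.
Variable n : nat.
Implicit Types F G : {mpoly R[n]}.

Lemma even_mpoly1 : even_mpoly (1 : {mpoly R[n]}).
Proof. by move=> m; rewrite msupp1 inE => /eqP -> i; rewrite mnm0E. Qed.

Lemma even_mpolyXn (i : 'I_n) j : ~~ odd j -> even_mpoly ('X_i ^+ j : {mpoly R[n]}).
Proof.
move=> j_even m; rewrite mpolyXn msuppX inE => /eqP -> i'.
by rewrite mulmnE mnm1E oddM (negbTE j_even) andbF.
Qed.

Lemma even_mpolyD F G : even_mpoly F -> even_mpoly G -> even_mpoly (F + G).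
Proof. by move=> eF eG m /msuppD_le; rewrite mem_cat => /orP[/eF|/eG]. Qed.

Lemma even_mpolyB F G : even_mpoly F -> even_mpoly G -> even_mpoly (F - G).
Proof. by move=> eF eG m /msuppB_le; rewrite mem_cat => /orP[/eF|/eG]. Qed.

Lemma even_mpolyMn F j : even_mpoly F -> even_mpoly (F *+ j).
Proof.
move=> eF m; rewrite mcoeff_msupp mcoeffMn => Fm_neq0; apply: eF.
by rewrite mcoeff_msupp; apply: contra Fm_neq0 => /eqP ->; rewrite mul0rn.
Qed.

Lemma even_mpolyM F G : even_mpoly F -> even_mpoly G -> even_mpoly (F * G).
Proof.
move=> eF eG m /msuppM_le /allpairsP [[m1 m2] /= [m1_F m2_G ->]] i.
by rewrite mnmDE oddD (negbTE (eF _ m1_F i)) (negbTE (eG _ m2_G i)).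
Qed.

Lemma even_sq_monomial : even_mpoly (sq_monomial n).
Proof.
apply: big_ind => //; [exact: even_mpoly1 | exact: even_mpolyM |].
by move=> i _; apply: even_mpolyXn.
Qed.

Lemma even_motzkin (i j l : 'I_n) : even_mpoly (motzkin 'X_i 'X_j 'X_l : {mpoly R[n]}).
Proof.
by rewrite /motzkin; repeat (apply: even_mpolyXn || apply: even_mpolyB ||
  apply: even_mpolyD || apply: even_mpolyM || apply: even_mpolyMn).
Qed.
End EvenMpoly.

Section Witness.
Variable n : nat.
Local Notation k := n.+4.

Definition motzkin_x234 : {mpoly R[k]} := motzkin 'X_(inord 1) 'X_(inord 2) 'X_(inord 3).
Definition witness : {mpoly R[k]} := sq_monomial k * motzkin_x234.

Lemma even_witness : even_mpoly witness.
Proof. by apply: even_mpolyM; [apply: even_sq_monomial | apply: even_motzkin]. Qed.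

Lemma homogeneous_witness : homogeneous witness.
Proof.
have X_homog (i : 'I_k) : ('X_i : {mpoly R[k]}) \is 1.-homog.
  by rewrite dhomogX; apply/eqP; exact: mdeg1.
have : sq_monomial k \is homog mdeg.
  rewrite /sq_monomial -(big_map (fun i : 'I_k => 'X_i ^+ 2) xpredT idfun).
  apply: homog_prod; apply/allP => _ /mapP [i _ ->].
  exact: homogE (dhomogMn 2 (X_homog i)).
case/homogP => d sq_homog; exists (d + 6)%N.
exact: dhomogM sq_homog (dhomog_motzkin (X_homog _) (X_homog _) (X_homog _)).
Qed.

Lemma witness_ge0 (x : 'I_k -> R) : 0 <= witness.@[x].
Proof.
rewrite /witness /motzkin_x234 rmorphM rmorph_prod rmorph_motzkin /= !mevalXU.
by rewrite mulr_ge0 ?motzkin_ge0 // prodr_ge0 // => i _; rewrite rmorphXn /= mevalXU sqr_ge0.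
Qed.
End Witness.

Section BadPoint.
Variable n : nat.
Local Notation k := n.+4.

(* x_1 |-> 1, x_2, x_3, x_4 |-> t Y, t Z, t W and, through the default of
   [nth], x_j |-> t for j >= 5. *)
Definition cone_var (i : 'I_k) : {poly {mpoly R[3]}} :=
  nth 'X [:: 1; 'X * Y%:P; 'X * Z%:P; 'X * W%:P] i.

Local Notation cone_subst := (mmap ((@polyC _) \o (@mpolyC 3 R)) cone_var).

Lemma cone_subst_X i : cone_subst 'X_i = cone_var i.
Proof. by rewrite mmapX mmap1U. Qed.

Lemma cone_subst_sq_monomial :
  cone_subst (sq_monomial k) = 'X^(2 * n + 6) * ((Y * Z * W) ^+ 2)%:P.
Proof.
rewrite rmorph_prod /=.
under eq_bigr do rewrite rmorphXn /= cone_subst_X.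
rewrite !big_ord_recl /= /cone_var /=.
under eq_bigr do rewrite nth_nil.
by rewrite prodr_const card_ord -exprM exprD !rmorphXn !rmorphM /=; ring.
Qed.

Lemma cone_subst_motzkin : cone_subst (motzkin_x234 n) = 'X^6 * (motzkin Y Z W)%:P.
Proof.
rewrite /motzkin_x234 rmorph_motzkin /= !cone_subst_X /cone_var !inordK //=.
by rewrite rmorph_motzkin /motzkin; ring.
Qed.

Lemma horner0_cone_subst q : (cone_subst q).[0] = (q.@[e1 k])%:MP.
Proof.
rewrite /mmap horner_sum mevalE rmorph_sum; apply: eq_bigr => m _ /=.
rewrite hornerM hornerC rmorphM /= /mmap1 horner_prod rmorph_prod; congr (_ * _).
apply: eq_bigr => i _; rewrite horner_exp rmorphXn; congr (_ ^+ _).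
rewrite /cone_var /e1; case: i => -[|[|[|[|j]]]] i_lt /=.
- by rewrite hornerC rmorph1.
- by rewrite hornerM hornerX mul0r rmorph0.
- by rewrite hornerM hornerX mul0r rmorph0.
- by rewrite hornerM hornerX mul0r rmorph0.
- by rewrite nth_nil hornerX rmorph0.
Qed.

Lemma bad_point_witness : bad_point (witness n) (e1 k).
Proof.
move=> q [_ [qs eq2p]]; apply/eqP/negPn/negP => q_neq0.
have : \sum_(F <- map (fun h => cone_subst h) qs) F ^+ 2 =
    'X^(2 * (n + 6)) * (cone_subst q ^+ 2 * motzkin_yzw%:P).
  rewrite big_map; under eq_bigr do rewrite -rmorphXn.
  rewrite -rmorph_sum -eq2p !rmorphM /= cone_subst_sq_monomial cone_subst_motzkin.
  by rewrite /motzkin_yzw !rmorphM /= mulnDr !exprD; ring.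
case/(sumsq_eq_X2n_mul (@mpoly_sumsq_eq0 3 R)) => Gs _ eGs.
have := congr1 (horner^~ 0) eGs; rewrite /= hornerM horner_exp horner0_cone_subst.
rewrite hornerC horner_sum => e0.
apply: (@motzkin_yzw_not_sumsq R [seq (q.@[e1 k])^-1%:MP * G.[0] | G <- Gs]).
rewrite big_map; under eq_bigr do rewrite exprMn -horner_exp.
by rewrite -mulr_sumr -e0 mulrA -exprMn -rmorphM /= mulVf // rmorph1 expr1n mul1r.
Qed.
End BadPoint.

Theorem lemma3p3 (k : nat) (hk : (4 <= k)%N) :
  exists p : {mpoly R[k]},
    [/\ even_mpoly p, in_Delta p, mdivides (sq_monomial k) p
      & bad_point p (e1 k)].
Proof.
case: k hk => [|[|[|[|n]]]] // _; exists (witness n); split.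
- exact: even_witness.
- split; first by split; [exact: homogeneous_witness | exact: witness_ge0].
  move=> witness_sos; have := @bad_point_witness n 1.
  by rewrite expr1n mul1r rmorph1 => /(_ witness_sos)/eqP; rewrite oner_eq0.
- by exists (motzkin_x234 n).
- exact: bad_point_witness.
Qed.
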